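(* Let $\mathbf{C}=\mathbf{C}_1\,\dot\cup\,\mathbf{C}_2$ (disjoint union), and let $\mathbf{B}\in\dot{\mathbb{P}}(\mathbb{L}(\mathbf{C}_1))$ with $|\mathbf{B}|=|\mathbf{C}_1|$. Then $\mathbf{B}$ is irreducible for $\mathcal{D}(\mathbf{C},\Omega)$ if and only if there exist $\omega^*\in\Omega$ and values $\mathbf{c}_2^*$ for $\mathbf{C}_2$ such that (i) $D_{\mathbf{B}=\mathbf{1},\mathbf{C}_2=\mathbf{c}_2^*}(\omega^* )=1$, and (ii) for every $L\in\mathbf{B}$, $D_{\mathbf{B}\setminus\{L\}=\mathbf{1},L=0,\mathbf{C}_2=\mathbf{c}_2^*}(\omega^* )=0$.
   Context: An event is a binary random variable on a population $\Omega$ of individuals $\omega$; $\overline{X}=1-X$. For a finite set $\mathbf{C}$ of events (causes), $\mathbb{L}(\mathbf{C})=\mathbf{C}\cup\{\overline{X}:X\in\mathbf{C}\}$, and $\dot{\mathbb{P}}(\mathbb{L}(\mathbf{C}))$ is the set of subsets of $\mathbb{L}(\mathbf{C})$ not containing both $X$ and $\overline{X}$ for any $X$. $(L)_{\mathbf{c}}$ is the value of literal $L$ under assignment $\mathbf{c}$, and $\bigwedge(\mathbf{B})=\min_{L\in\mathbf{B}}L$. The potential outcomes $\mathcal{D}(\mathbf{C},\Omega)$ are values $D_{\mathbf{c}}(\omega)\in\{0,1\}$ for every $\omega\in\Omega$ and every assignment $\mathbf{c}$ to $\mathbf{C}$. If $\mathbf{B}\in\dot{\mathbb{P}}(\mathbb{L}(\mathbf{C}_1))$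 has $|\mathbf{B}|=|\mathbf{C}_1|$ (exactly one literal per variable of $\mathbf{C}_1$), an assignment of values to the literals of $\mathbf{B}$ determines an assignment to $\mathbf{C}_1$; thus e.g. $D_{\mathbf{B}=\mathbf{1},\mathbf{C}_2=\mathbf{c}_2}(\omega)$ denotes the potential outcome when all literals in $\mathbf{B}$ are set to 1 and $\mathbf{C}_2$ to $\mathbf{c}_2$, and $D_{\mathbf{B}\setminus\{L\}=\mathbf{1},L=0,\mathbf{C}_2=\mathbf{c}_2}(\omega)$ the one where $L$ is set to 0 and the other literals of $\mathbf{B}$ to 1. A sufficient cause representation $(\mathbf{A},\mathfrak{B})$ for $\mathcal{D}(\mathbf{C},\Omega)$ is a tuple $\mathbf{A}=\langle A_1,\dots,A_p\rangle$ of binary random variables on $\Omega$ unaffected by interventions on $\mathbf{C}$ and a tuple $\mathfrak{B}=\langle\mathbf{B}_1,\dots,\mathbf{B}_p\rangle$, $\mathbf{B}_i\in\dot{\mathbb{P}}(\mathbb{L}(\mathbf{C}))$, such that for all $\omega,\mathbf{c}$: $D_{\mathbf{c}}(\omega)=1$ iff some $j$ has $A_j(\omega)=1$ and $(\bigwedge(\mathbf{B}_j))_{\mathbf{c}}=1$. A set $\mathbf{B}\in\dot{\mathbb{P}}(\mathbb{L}(\mathbf{C}))$ is irreducible for $\mathcal{D}(\mathbf{C},\Omega)$ if in every sufficient cause representation $(\mathbf{A},\mathfrak{B})$ for $\mathcal{D}(\mathbf{C},\Omega)$ there is some $\mathbf{B}_i\in\mathfrak{B}$ with $\mathbf{B}\subseteq\mathbf{B}_i$.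 *)

From mathcomp Require Import all_boot.
Set Implicit Arguments. Unset Strict Implicit. Unset Printing Implicit Defensive.

(* Causes: the elements of a finite type V (the set C).
   A literal is a pair (X, b): (X, true) is the literal X, (X, false) is X-bar.
   Potential outcomes D(C, Omega): D w c = D_c(w). *)

Definition literal (V : finType) := (V * bool)%type.

Definition litval (V : finType) (L : literal V) (c : {ffun V -> bool}) : bool :=
  if L.2 then c L.1 else ~~ c L.1.

Definition conjB (V : finType) (B : {set literal V}) (c : {ffun V -> bool}) : bool :=
  [forall L in B, litval L c].

Definition dotP (V : finType) (C1 : {set V}) (B : {set literal V}) : Prop :=
  (forall L, L \in B -> L.1 \in C1) /\
  (forall X : V, ~ ((X, true) \in B /\ (X, false) \in B)).

Definition is_scr (Omega : Type) (V : finType)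
    (D : Omega -> {ffun V -> bool} -> bool)
    (p : nat) (A : 'I_p -> Omega -> bool) (Bs : 'I_p -> {set literal V}) : Prop :=
  (forall i, dotP [set: V] (Bs i)) /\
  (forall w c, D w c = [exists j, A j w && conjB (Bs j) c]).

Definition irreducible (Omega : Type) (V : finType)
    (D : Omega -> {ffun V -> bool} -> bool) (B : {set literal V}) : Prop :=
  forall p A Bs, @is_scr Omega V D p A Bs -> exists i, B \subset Bs i.

(* With S having one literal per variable of C1 and c2 only read on
   C2 = V \ C1, setlits B c2 is the intervention "B = 1, C2 = c2". *)
Definition setlits (V : finType) (S : {set literal V}) (c2 : {ffun V -> bool})
  : {ffun V -> bool} :=
  [ffun X => if (X, true) \in S then true
             else if (X, false) \in S then false else c2 X].

(* complement literal Lbar, so "L = 0" is "Lbar = 1" *)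
Definition negLit (V : finType) (L : literal V) : literal V := (L.1, ~~ L.2).

From mathcomp Require Import all_boot.
From Stdlib Require Import Classical.
Set Implicit Arguments. Unset Strict Implicit. Unset Printing Implicit Defensive.

(* Call (w, c) a critical witness for B when c makes every literal of B true,
   D_c(w) = 1, and flipping the variable of any single literal of B turns the
   outcome off.  The theorem splits into three facts:
   - a critical witness forces irreducibility: the term of any representation
     that fires at (w, c) cannot miss a literal L of B, for otherwise it would
     still fire after flipping L, contradicting criticality;
   - conversely, without a critical witness D has an explicit representation
     none of whose conjunctions contains B: the full minterms of the
     assignments violating B, plus, for every assignment c satisfying B with
     D_c(w) = 1, its minterm with the variable of an "escaping" literal of B
     deleted (classical logic supplies the escaping literals);
   - the interventions "B = 1, C2 = c2" and "L = 0, B \ {L} = 1, C2 = c2" of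
     the statement are exactly an assignment satisfying B and its flip at the
     variable of L, so the witness of the statement is a critical witness. *)

Definition lits (V : finType) (c : {ffun V -> bool}) : {set literal V} :=
  [set L : literal V | L.2 == c L.1].

Definition flip (V : finType) (c : {ffun V -> bool}) (X : V) : {ffun V -> bool} :=
  [ffun Y => if Y == X then ~~ c X else c Y].

Section Minterms.
Variable V : finType.
Implicit Types (c : {ffun V -> bool}) (S : {set literal V}) (X : V).

Lemma litvalE (L : literal V) c : litval L c = (L.2 == c L.1).
Proof. by case: L => X [] /=; rewrite /litval /=; case: (c X). Qed.

Lemma flip_at c X : flip c X X = ~~ c X.
Proof. by rewrite ffunE eqxx. Qed.

Lemma flip_off c X Y : Y != X -> flip c X Y = c Y.
Proof. by rewrite ffunE => /negbTE ->. Qed.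

Lemma dotP_sub_lits S c : S \subset lits c -> dotP [set: V] S.
Proof.
move=> /subsetP Sc; split=> [L _|X [/Sc XT /Sc XF]]; first by rewrite inE.
by move: XT XF; rewrite !inE /= => /eqP <- /eqP.
Qed.

Lemma conjB_sub_lits S c : S \subset lits c -> conjB S c.
Proof.
move=> /subsetP Sc; apply/forallP => L; apply/implyP => /Sc.
by rewrite inE litvalE.
Qed.

Lemma conjB_lits c c' : conjB (lits c) c' -> c' = c.
Proof.
move=> /forallP Hc; apply/ffunP => X.
by have := Hc (X, c X); rewrite inE eqxx litvalE /= => /eqP.
Qed.

Lemma conjB_lits_drop c c' X :
  conjB (lits c :\ (X, c X)) c' -> c' = c \/ c' = flip c X.
Proof.
move=> /forallP Hc.
have agree Y : Y != X -> c' Y = c Y.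
  move=> nYX; have := Hc (Y, c Y); rewrite !inE /= eqxx andbT litvalE /=.
  have -> : (Y, c Y) != (X, c X) by apply: contra nYX => /eqP [->].
  by move=> /eqP.
have [eX|nX] := eqVneq (c' X) (c X).
  left; apply/ffunP => Y; have [->|nYX] := eqVneq Y X; first exact: eX.
  exact: agree.
right; apply/ffunP => Y; have [->|nYX] := eqVneq Y X.
  by rewrite flip_at; move: nX; case: (c' X); case: (c X).
by rewrite flip_off // agree.
Qed.

(* A conjunction true at c that avoids the literal (X, c X) mentions no
   literal on X, so it stays true when X is flipped. *)
Lemma conjB_flip S c X :
  conjB S c -> (X, c X) \notin S -> conjB S (flip c X).
Proof.
move=> /forallP Sc nXS; apply/forallP => L; apply/implyP => LS.
have := implyP (Sc L) LS; rewrite !litvalE.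
case: (eqVneq L.1 X) => [eLX|nLX]; last by rewrite flip_off.
move=> /eqP eL2; move: LS nXS; rewrite -eLX -eL2.
by case: (L) => ? ? ->.
Qed.

End Minterms.

Section Irreducibility.
Variables (Omega : Type) (V : finType) (D : Omega -> {ffun V -> bool} -> bool).
Variable B : {set literal V}.

Definition critical (w : Omega) (c : {ffun V -> bool}) : Prop :=
  [/\ B \subset lits c, D w c & forall L, L \in B -> ~~ D w (flip c L.1)].

Lemma irreducible_of_critical w c : critical w c -> irreducible D B.
Proof.
move=> [Bc Dwc crit] p A Bs [_ repr].
move: Dwc; rewrite repr => /existsP [j /andP [Ajw Cjc]].
exists j; apply/subsetP => L LB; apply/negPn/negP => nLBj.
have eL : L = (L.1, c L.1).
  by move/subsetP: Bc => /(_ L LB); rewrite inE; case: L {LB nLBj} => X b /= /eqP ->.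
have := crit L LB; rewrite repr => /existsP; apply; exists j.
by rewrite Ajw conjB_flip // -eL.
Qed.

Lemma irreducible_fin_terms (I : finType) (a : I -> Omega -> bool)
    (bs : I -> {set literal V}) :
  irreducible D B -> (forall i, dotP [set: V] (bs i)) ->
  (forall w c, D w c = [exists i, a i w && conjB (bs i) c]) ->
  exists i, B \subset bs i.
Proof.
move=> irr bs_ok repr.
have scr : is_scr D (fun j : 'I_#|I| => a (enum_val j)) (fun j => bs (enum_val j)).
  split=> [j|w c]; first exact: bs_ok.
  rewrite repr; apply/existsP/existsP => [[i Hi]|[j Hj]]; last by exists (enum_val j).
  by exists (enum_rank i); rewrite enum_rankK.
by have [j Bj] := irr _ _ _ scr; exists (enum_val j).
Qed.

Section NoCriticalWitness.
Hypothesis escape : forall w c, B \subset lits c -> D w c ->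
  exists2 L, L \in B & D w (flip c L.1).

(* Terms of the representation: (c, None) for assignments violating B, and
   (c, Some L) for an escaping literal L of B. *)
Definition term_ok (t : {ffun V -> bool} * option (literal V)) : bool :=
  if t.2 is Some L then L \in B else ~~ (B \subset lits t.1).

Definition term := {t : {ffun V -> bool} * option (literal V) | term_ok t}.

Definition term_act (t : term) (w : Omega) : bool :=
  let: (c, o) := val t in
  if o is Some L then D w c && D w (flip c L.1) else D w c.

Definition term_lits (t : term) : {set literal V} :=
  let: (c, o) := val t in
  if o is Some L then lits c :\ (L.1, c L.1) else lits c.

Lemma term_lits_minterm (t : term) : term_lits t \subset lits (val t).1.
Proof. by rewrite /term_lits; case: (val t) => c [L|] /=; rewrite ?subsetDl. Qed.

Lemma term_repr w c : D w c = [exists t, term_act t w && conjB (term_lits t) c].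
Proof.
apply/idP/existsP => [Dwc|[[[c' [L|]] ok]]]; rewrite /term_act /term_lits /=.
- have [Bc|nBc] := boolP (B \subset lits c).
    have [L LB DL] := escape Bc Dwc.
    exists (exist term_ok (c, Some L) LB); rewrite /= Dwc DL.
    by apply: conjB_sub_lits; rewrite subsetDl.
  exists (exist term_ok (c, None) nBc); rewrite /= Dwc.
  exact: conjB_sub_lits.
- by move=> /andP [/andP [D1 D2] /conjB_lits_drop [->|->]].
- by move=> /andP [D1 /conjB_lits ->].
Qed.

(* No term contains B: a minterm containing B satisfies B, and a dropped
   minterm lacks the escaping literal of B. *)
Lemma term_lits_miss (t : term) : ~~ (B \subset term_lits t).
Proof.
case: t => -[c [L|]] ok; rewrite /term_lits //=.
apply/negP => /subsetP /(_ L ok); rewrite !inE => /andP [/negP nL /eqP eL].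
by apply: nL; rewrite -eL; case: (L).
Qed.

Lemma not_irreducible : ~ irreducible D B.
Proof.
move=> irr; have [t Bt] := irreducible_fin_terms irr
  (fun t => dotP_sub_lits (term_lits_minterm t)) term_repr.
by move: (term_lits_miss t); rewrite Bt.
Qed.

End NoCriticalWitness.

Lemma critical_of_irreducible : irreducible D B -> exists w c, critical w c.
Proof.
move=> irr; apply: NNPP => none; apply: (not_irreducible _ irr) => w c Bc Dwc.
apply: NNPP => stuck; apply: none; exists w, c; split=> // L LB.
by apply/negP => DL; apply: stuck; exists L.
Qed.

End Irreducibility.

Section Interventions.
Variables (V : finType) (C1 : {set V}) (B : {set literal V}).
Hypothesis hB : dotP C1 B.

Lemma setlits_at L c2 : L \in B -> setlits B c2 L.1 = L.2.
Proof.
case: L => X [] LB /=; rewrite ffunE LB //.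
by case: ifP => // XT; case: (hB.2 X).
Qed.

Lemma setlits_minterm c2 : B \subset lits (setlits B c2).
Proof. by apply/subsetP => L LB; rewrite inE setlits_at. Qed.

Lemma setlits_id c : B \subset lits c -> setlits B c = c.
Proof.
move=> /subsetP Bc; apply/ffunP => X; rewrite ffunE.
case: ifP => [/Bc|_]; first by rewrite inE /= => /eqP.
by case: ifP => [/Bc|_] //; rewrite inE /= => /eqP.
Qed.

Lemma setlits_negLit L c2 : L \in B ->
  setlits ((B :\ L) :|: [set negLit L]) c2 = flip (setlits B c2) L.1.
Proof.
move=> LB; apply/ffunP => Y; rewrite [RHS]ffunE setlits_at //.
case: L LB => X b LB /=; rewrite ffunE /negLit /=.
case: (eqVneq Y X) => [->|nYX].
  by case: b LB => LB; rewrite !inE ?eqxx ?orbT //=; case: ifP => // /eqP [].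
have other b' : ((Y, b') \in (B :\ (X, b)) :|: [set (X, ~~ b)]) = ((Y, b') \in B).
  rewrite !inE; have neq b'' : ((Y, b') == (X, b'')) = false.
    by apply/eqP => -[eYX]; rewrite eYX eqxx in nYX.
  by rewrite !neq orbF.
by rewrite !other ffunE.
Qed.

Lemma witness_critical (Omega : Type) (D : Omega -> {ffun V -> bool} -> bool) :
  (exists (w : Omega) (c2 : {ffun V -> bool}),
    D w (setlits B c2) = true /\
    (forall L, L \in B -> D w (setlits ((B :\ L) :|: [set negLit L]) c2) = false))
  <-> exists w c, critical D B w c.
Proof.
split=> [[w [c2 [D1 D0]]]|[w [c [Bc Dwc crit]]]].
  exists w, (setlits B c2); split; rewrite ?setlits_minterm // => L LB.
  by rewrite -setlits_negLit // D0.
exists w, c; rewrite setlits_id //; split=> // L LB.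
by rewrite setlits_negLit // setlits_id //; apply/negbTE/crit.
Qed.

End Interventions.

Theorem mainTheorem2 (Omega : Type) (V : finType)
    (D : Omega -> {ffun V -> bool} -> bool)
    (C1 C2 : {set V})
    (hdisj : [disjoint C1 & C2]) (hcov : C1 :|: C2 = [set: V])
    (B : {set literal V}) (hB : dotP C1 B) (hcard : #|B| = #|C1|) :
  irreducible D B <->
  exists (w : Omega) (c2 : {ffun V -> bool}),
    D w (setlits B c2) = true /\
    (forall L, L \in B ->
       D w (setlits ((B :\ L) :|: [set negLit L]) c2) = false).
Proof.
rewrite (witness_critical hB D); split; first exact: critical_of_irreducible.
by move=> [w [c crit]]; exact: irreducible_of_critical crit.
Qed.
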